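(* Let $m>a\geq0$, $n>b\geq0$ be integers. If there exists a regular erasure pattern $\mathcal{E}\subseteq[m]\times[n]$ that is not correctable in $T_{m\times n}(a,b,0)$, then for any non-negative integers $\delta,\gamma$ there exists a regular erasure pattern $\mathcal{E}'\subseteq[m+\delta]\times[n+\gamma]$ that is not correctable in $T_{(m+\delta)\times(n+\gamma)}(a,b,0)$.
   Context: Positions of vectors in $\mathbb{F}^{mn}$ are identified with $[m]\times[n]$, $[k]=\{1,\dots,k\}$. For linear codes $\mathcal{C}_1\subseteq\mathbb{F}^m,\mathcal{C}_2\subseteq\mathbb{F}^n$, $\mathcal{C}_1\otimes\mathcal{C}_2$ is the row span of the Kronecker product of their generator matrices. A code for the topology $T_{m\times n}(a,b,0)$ is a linear code over a finite field $\mathbb{F}$ whose parity-check matrix is a parity-check matrix of $\mathcal{C}_{\mathsf{col}}\otimes\mathcal{C}_{\mathsf{row}}$, where $\mathcal{C}_{\mathsf{col}}$ is a linear $[m,\geq m-a]$ code and $\mathcal{C}_{\mathsf{row}}$ a linear $[n,\geq n-b]$ code over $\mathbb{F}$; $\mathbb{C}_{m\times n}(a,b,0)$ is the set of these codes (over any finite field). A code corrects an erasure pattern $\mathcal{E}$ if no two distinct codewords agree on all positions outside $\mathcal{E}$; $\mathcal{E}$ is correctable in $T_{m\times n}(a,b,0)$ if some code in $\mathbb{C}_{m\times n}(a,b,0)$ corrects it. An erasure pattern $\mathcal{E}\subseteq[m]\times[n]$ is regular (for $T_{m\times n}(a,b,0)$) if for all $\mathcal{U}\subseteq[m]$ with $|\mathcal{U}|=u\geq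 a$ and all $\mathcal{V}\subseteq[n]$ with $|\mathcal{V}|=v\geq b$ one has $|\mathcal{E}\cap(\mathcal{U}\times\mathcal{V})|\leq va+ub-ab$. *)

From HB Require Import structures.
From mathcomp Require Import all_boot all_order all_algebra.
From mathcomp Require Import mxtens.
Set Implicit Arguments. Unset Strict Implicit. Unset Printing Implicit Defensive.
Import GRing.Theory.
Local Open Scope ring_scope.

(* A linear code C ⊆ F^k is represented by a generator matrix G : 'M[F]_k
   (square, k rows, so every subspace is representable); C = row space of G,
   dim C = \rank G.  The tensor code C1 ⊗ C2 ⊆ F^(m*n) is the row span of the
   Kronecker product tensmx G1 G2.  Position (i,j) ∈ [m]×[n] is identified
   with coordinate mxtens_index (i, j) of F^(m*n). *)

Definition corrects (F : fieldType) (m n k : nat) (H : 'M[F]_(k, m * n))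
    (E : {set 'I_m * 'I_n}) : Prop :=
  forall c c' : 'rV[F]_(m * n),
    (c <= H)%MS -> (c' <= H)%MS ->
    (forall (i : 'I_m) (j : 'I_n), (i, j) \notin E ->
        c 0 (mxtens_index (i, j)) = c' 0 (mxtens_index (i, j))) ->
    c = c'.

Definition correctable (m n a b : nat) (E : {set 'I_m * 'I_n}) : Prop :=
  exists (F : finFieldType) (Gcol : 'M[F]_m) (Grow : 'M[F]_n),
    [/\ (m - a <= \rank Gcol)%N, (n - b <= \rank Grow)%N
      & corrects (tensmx Gcol Grow) E].

Definition regular (m n a b : nat) (E : {set 'I_m * 'I_n}) : Prop :=
  forall (U : {set 'I_m}) (V : {set 'I_n}),
    (a <= #|U|)%N -> (b <= #|V|)%N ->
    (#|E :&: setX U V| <= #|V| * a + #|U| * b - a * b)%N.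

From mathcomp Require Import all_boot all_order all_algebra.
From mathcomp Require Import mxtens.
From mathcomp Require Import zify.
Set Implicit Arguments. Unset Strict Implicit. Unset Printing Implicit Defensive.
Import GRing.Theory.
Local Open Scope ring_scope.

(* Place the small array inside the large one through injections of the row
   and column indices.  Regularity survives, since a rectangle of the large
   array meets the image of E in at most what E leaves in the preimage
   rectangle.  Correctability transfers back: the shortenings of the large
   column and row codes (codewords vanishing off the image, read on the image)
   lose at most m' - m and n' - n dimensions, and their tensor product embeds
   into the large tensor code, so it corrects E whenever the large code
   corrects the image of E. *)

Lemma tens1mx1 (R : comPzRingType) m n :
  (1%:M : 'M[R]_m) *t (1%:M : 'M[R]_n) = 1%:M.
Proof.
apply/matrixP => x y.
case: (mxtens_indexP x) => i j; case: (mxtens_indexP y) => k l.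
rewrite tensmxE !mxE (inj_eq (can_inj (@mxtens_indexK m n))) xpair_eqE.
by case: (i == k); case: (j == l); rewrite /= ?mulr1 ?mulr0.
Qed.

Lemma row_free_tensmx (F : fieldType) m n p q (A : 'M[F]_(m, n))
    (B : 'M[F]_(p, q)) :
  row_free A -> row_free B -> row_free (A *t B).
Proof.
move=> /row_freeP[A' AA'] /row_freeP[B' BB']; apply/row_freeP.
by exists (A' *t B'); rewrite tensmx_mul AA' BB' tens1mx1.
Qed.

Lemma exists_shortening (F : fieldType) p q (S : 'M[F]_(p, q)) (G : 'M[F]_q) :
  row_free S ->
  exists G' : 'M[F]_p, (\rank G + p <= \rank G' + q)%N /\ (G' *m S <= G)%MS.
Proof.
move=> freeS; have [S' SS'] := row_freeP freeS.
set A := (G :&: S)%MS.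
have AS'S : A *m S' *m S = A.
  have /submxP[D ->] : (A <= S)%MS by apply: capmxSr.
  by rewrite -!mulmxA (mulmxA S S' S) SS' mul1mx.
exists <<A *m S'>>%MS; split.
  have rkA : (\rank A <= \rank (A *m S'))%N by rewrite -{1}AS'S mxrankM_maxl.
  have := mxrank_sum_cap G S; have := rank_leq_col (G + S)%MS.
  rewrite genmxE (eqP freeS) -/A; lia.
by rewrite (eqmxMr S (genmxE _)) AS'S capmxSl.
Qed.

Section Embedding.

Variable F : fieldType.

Definition embmx m m' (f : 'I_m -> 'I_m') : 'M[F]_(m, m') := rowsub f 1%:M.

Lemma embmxE m m' (f : 'I_m -> 'I_m') i i' : embmx f i i' = (f i == i')%:R.
Proof. by rewrite !mxE. Qed.

Lemma row_free_embmx m m' (f : 'I_m -> 'I_m') : injective f -> row_free (embmx f).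
Proof.
move=> injf; apply/row_freeP; exists (embmx f)^T.
apply/matrixP => i j; rewrite !mxE (bigD1 (f j)) //= big1 => [|k kf].
  by rewrite !mxE eqxx mulr1 addr0 (inj_eq injf).
by rewrite !mxE [f j == _]eq_sym (negPf kf) mulr0.
Qed.

Lemma mul_tens_embmxE m n m' n' (f : 'I_m -> 'I_m') (g : 'I_n -> 'I_n')
    (c : 'rV[F]_(m * n)) i' j' :
  (c *m (embmx f *t embmx g)) 0 (mxtens_index (i', j')) =
  \sum_i \sum_j c 0 (mxtens_index (i, j)) * ((f i == i') && (g j == j'))%:R.
Proof.
rewrite mxE (reindex (@mxtens_index m n)) /=; last first.
  by apply: onW_bij; exists (@mxtens_unindex m n);
    [exact: mxtens_indexK | exact: mxtens_unindexK].
rewrite pair_big; apply: eq_bigr => -[i j] _ /=.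
by rewrite tensmxE !embmxE -natrM mulnb.
Qed.

End Embedding.

Definition embed_pattern m n m' n' (f : 'I_m -> 'I_m') (g : 'I_n -> 'I_n')
    (E : {set 'I_m * 'I_n}) : {set 'I_m' * 'I_n'} :=
  [set (f p.1, g p.2) | p in E].

Lemma corrects_embed (F : fieldType) m n m' n' (f : 'I_m -> 'I_m')
    (g : 'I_n -> 'I_n') (G1 : 'M[F]_m') (G2 : 'M[F]_n') (H1 : 'M[F]_m)
    (H2 : 'M[F]_n) (E : {set 'I_m * 'I_n}) :
  injective f -> injective g ->
  (H1 *m embmx F f <= G1)%MS -> (H2 *m embmx F g <= G2)%MS ->
  corrects (G1 *t G2) (embed_pattern f g E) -> corrects (H1 *t H2) E.
Proof.
move=> injf injg sH1 sH2 corE c c' Hc Hc' agree.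
have free_emb := row_free_tensmx (row_free_embmx F injf) (row_free_embmx F injg).
have embed_code x : (x <= H1 *t H2)%MS ->
    (x *m (embmx F f *t embmx F g) <= G1 *t G2)%MS.
  case/submxP => D ->; case/submxP: sH1 => X eX; case/submxP: sH2 => Y eY.
  by rewrite -mulmxA tensmx_mul eX eY -tensmx_mul mulmxA submxMl.
apply: (row_free_inj free_emb); apply: corE; [exact: embed_code..|].
move=> i' j' notE; rewrite !mul_tens_embmxE.
apply: eq_bigr => i _; apply: eq_bigr => j _.
have [ijE | /agree-> //] := boolP ((i, j) \in E).
case: (f i =P i') => [fi|]; case: (g j =P j') => [gj|] //=; rewrite ?mulr0 //.
by case/imsetP: notE; exists (i, j); rewrite // fi gj.
Qed.

Lemma leq_card_preimset (T T' : finType) (h : T -> T') (A : {set T'}) :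
  injective h -> (#|h @^-1: A| <= #|A|)%N.
Proof.
move=> injh; rewrite -(card_imset _ injh); apply/subset_leq_card/subsetP.
by move=> y /imsetP[x]; rewrite inE => Ax ->.
Qed.

Lemma leq_regular_bound_sub a b u v u1 v1 k :
  (a <= u)%N -> (b <= v)%N -> (u1 <= u)%N -> (v1 <= v)%N -> (k <= u1 * v1)%N ->
  ((a <= u1)%N -> (b <= v1)%N -> (k <= v1 * a + u1 * b - a * b)%N) ->
  (k <= v * a + u * b - a * b)%N.
Proof.
move=> au bv u1u v1v k_le k_reg.
have [au1|] := leqP a u1; last nia.
have [bv1|] := leqP b v1; last nia.
have := k_reg au1 bv1; nia.
Qed.

Lemma regular_embed m n m' n' (f : 'I_m -> 'I_m') (g : 'I_n -> 'I_n') a b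
    (E : {set 'I_m * 'I_n}) :
  injective f -> injective g -> regular a b E -> regular a b (embed_pattern f g E).
Proof.
move=> injf injg regE U V aU bV.
set U1 := f @^-1: U; set V1 := g @^-1: V.
have count_preim : (#|embed_pattern f g E :&: setX U V| <= #|E :&: setX U1 V1|)%N.
  apply: leq_trans (leq_imset_card (fun p => (f p.1, g p.2)) _).
  apply/subset_leq_card/subsetP => _ /setIP[/imsetP[p pE ->] /setXP[fU gV]].
  by apply/imsetP; exists p; rewrite // !inE pE fU gV.
apply: leq_trans count_preim _.
apply: leq_regular_bound_sub
  (leq_card_preimset _ injf) (leq_card_preimset _ injg) _ _ => //.
  by rewrite -cardsX subset_leq_card ?subsetIr.
exact: regE.
Qed.

Lemma correctable_embed m n m' n' (f : 'I_m -> 'I_m') (g : 'I_n -> 'I_n') a b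
    (E : {set 'I_m * 'I_n}) :
  injective f -> injective g -> correctable a b (embed_pattern f g E) ->
  correctable a b E.
Proof.
move=> injf injg [F [G1 [G2 [rkG1 rkG2 corE]]]].
have [H1 [rkH1 sH1]] := exists_shortening G1 (row_free_embmx F injf).
have [H2 [rkH2 sH2]] := exists_shortening G2 (row_free_embmx F injg).
have := leq_card f injf; have := leq_card g injg; rewrite !card_ord => nn' mm'.
exists F, H1, H2; split; [lia | lia | exact: corrects_embed corE].
Qed.

Theorem lemma6 (m n a b : nat) :
  (a < m)%N -> (b < n)%N ->
  (exists E : {set 'I_m * 'I_n}, regular a b E /\ ~ correctable a b E) ->
  forall delta gamma : nat,
    exists E' : {set 'I_(m + delta) * 'I_(n + gamma)},
      regular a b E' /\ ~ correctable a b E'.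
Proof.
move=> _ _ [E [regE ncorE]] delta gamma.
have injl := @lshift_inj m delta; have injr := @lshift_inj n gamma.
exists (embed_pattern (lshift delta) (lshift gamma) E); split.
  exact: regular_embed.
by move/correctable_embed => /(_ injl injr).
Qed.
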